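(* Let $G$ be a connected edge-stable equimatchable graph that has a cut vertex. Then $G$ is bipartite.
   Context: All graphs are finite and simple. A graph is equimatchable if all its maximal matchings have the same cardinality. An equimatchable graph $G$ is edge-stable if $G\setminus e$ (remove the edge $e$, keep all vertices) is equimatchable for every $e\in E(G)$. A cut vertex of a connected graph is a vertex whose removal disconnects the graph. *)

From mathcomp Require Import all_boot.
Set Implicit Arguments. Unset Strict Implicit. Unset Printing Implicit Defensive.

Definition simple_graph (V : finType) (E : {set {set V}}) : Prop :=
  forall e, e \in E -> #|e| = 2.

Definition adj_in (V : finType) (E : {set {set V}}) (S : {set V}) : rel V :=
  fun x y => [&& x \in S, y \in S, x != y & [set x; y] \in E].

Definition connected_in (V : finType) (E : {set {set V}}) (S : {set V}) : Prop :=
  forall x y, x \in S -> y \in S -> connect (adj_in E S) x y.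

Definition connected_graph (V : finType) (E : {set {set V}}) : Prop :=
  connected_in E [set: V].

Definition cut_vertex (V : finType) (E : {set {set V}}) (v : V) : Prop :=
  ~ connected_in E ([set: V] :\ v).

Definition matching (V : finType) (E M : {set {set V}}) : Prop :=
  M \subset E /\ (forall e f : {set V}, e \in M -> f \in M -> e != f -> [disjoint e & f]).

Definition maximal_matching (V : finType) (E M : {set {set V}}) : Prop :=
  matching E M /\
  forall e, e \in E -> e \notin M -> ~ matching E (e |: M).

Definition equimatchable (V : finType) (E : {set {set V}}) : Prop :=
  forall M1 M2, maximal_matching E M1 -> maximal_matching E M2 -> #|M1| = #|M2|.

Definition edge_stable (V : finType) (E : {set {set V}}) : Prop :=
  equimatchable E /\ forall e, e \in E -> equimatchable (E :\ e).

Definition bipartite (V : finType) (E : {set {set V}}) : Prop :=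
  exists A : {set V}, forall e, e \in E -> #|e :&: A| = 1.

From mathcomp Require Import all_boot zify.
From Stdlib Require Import Classical ClassicalDescription.
Set Implicit Arguments. Unset Strict Implicit. Unset Printing Implicit Defensive.

(* Call a vertex always covered if every maximal matching covers it.  In an
   edge-stable equimatchable graph without isolated edges, every edge of a
   maximal matching has an endpoint adjacent to an exposed vertex: otherwise
   deleting that edge leaves a maximal matching of G - e that is smaller than
   one containing an adjacent edge.  Exchange arguments built on this show
   that always covered vertices are pairwise non-adjacent and that every
   vertex at distance two from an always covered vertex is always covered, so
   in a connected graph a single always covered vertex makes the always
   covered vertices one side of a bipartition.  A cut vertex v supplies one:
   if v and neighbours x, w of v on the two sides of the cut were each exposed
   by some maximal matching, recombining the halves of these matchings on
   either side of v yields maximal matchings of different sizes. *)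

Lemma disjoint_set2 (T : finType) (a b : T) (A : {set T}) :
  [disjoint [set a; b] & A] = (a \notin A) && (b \notin A).
Proof. by rewrite disjoints_subset subUset !sub1set !inE. Qed.

Lemma connect_exit (T : finType) (r : rel T) (P : pred T) a b :
  connect r a b -> P a -> ~~ P b -> exists p q, [/\ P p, ~~ P q & r p q].
Proof.
move=> /connectP[s + ->]; elim: s a => [|z s IHs] a /=; first by move=> _ ->.
case/andP=> raz pzs Pa; case Pz: (P z); first exact: IHs.
by exists a, z; rewrite Pz.
Qed.

Definition asbool (P : Prop) : bool :=
  if excluded_middle_informative P then true else false.

Lemma asboolP (P : Prop) : reflect P (asbool P).
Proof. by rewrite /asbool; case: excluded_middle_informative => H; constructor. Qed.

Lemma cards2I1 (T : finType) (p q : T) (A : {set T}) :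
  p \in A -> q \notin A -> #|[set p; q] :&: A| = 1.
Proof.
move=> pA qA; apply/eqP/cards1P; exists p; apply/setP => z; rewrite !inE.
by case: (eqVneq z p) => [->|_]; [rewrite pA | case: eqVneq => [->|]; rewrite ?(negbTE qA)].
Qed.

Section Matchings.

Variables (V : finType) (E : {set {set V}}).
Implicit Types (M N : {set {set V}}) (e f : {set V}).

Lemma cover_setU M N : cover (M :|: N) = cover M :|: cover N.
Proof. exact: bigcup_setU. Qed.

Lemma cover_setU1 e M : cover (e |: M) = e :|: cover M.
Proof. by rewrite cover_setU cover1. Qed.

Lemma mem_cover M e z : e \in M -> z \in e -> z \in cover M.
Proof. by move=> eM ze; apply/bigcupP; exists e. Qed.

Lemma disjoint_cover_notin M e : e != set0 -> [disjoint e & cover M] -> e \notin M.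
Proof.
move=> e0 de; apply: contra e0 => eM.
by rewrite -subset0 -(disjoint_setI0 (disjointWr (bigcup_sup e eM) de)) setIid.
Qed.

Lemma disjoint_cover_disjoint M N :
  set0 \notin M -> [disjoint cover M & cover N] -> [disjoint M & N].
Proof.
move=> M0 dMN; rewrite -setI_eq0; apply/set0Pn => -[e /setIP[eM eN]].
have /set0Pn[z ze] : e != set0 by apply: contraNneq M0 => <-.
by have := mem_cover eN ze; rewrite (disjointFr dMN (mem_cover eM ze)).
Qed.

Lemma card_setU1_disjoint M e :
  e != set0 -> [disjoint e & cover M] -> #|e |: M| = #|M|.+1.
Proof. by move=> e0 de; rewrite cardsU1 disjoint_cover_notin. Qed.

Lemma matchingP M : reflect (matching E M) ((M \subset E) && trivIset M).
Proof.
apply: (iffP andP) => -[ME tM]; split=> //; first exact/trivIsetP.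
by apply/trivIsetP.
Qed.

Lemma matching_edge M e : matching E M -> e \in M -> e \in E.
Proof. by case=> /subsetP ME _ /ME. Qed.

Lemma matching_trivIset M : matching E M -> trivIset M.
Proof. by case/matchingP/andP. Qed.

Lemma matching_eq M e f z :
  matching E M -> e \in M -> f \in M -> z \in e -> z \in f -> e = f.
Proof.
move=> [_ dM] eM fM ze zf; case: (eqVneq e f) => // /(dM _ _ eM fM).
by move/disjointFr/(_ ze); rewrite zf.
Qed.

Lemma matchingS M N : N \subset M -> matching E M -> matching E N.
Proof.
move=> NM /matchingP/andP[ME tM]; apply/matchingP.
by rewrite (subset_trans NM ME) (trivIsetS NM tM).
Qed.

Lemma matching_set1 e : e \in E -> matching E [set e].
Proof. by move=> eE; apply/matchingP; rewrite sub1set eE trivIset1. Qed.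

Lemma matchingU M N :
  matching E M -> matching E N -> [disjoint cover M & cover N] ->
  matching E (M :|: N).
Proof.
move=> /matchingP/andP[ME tM] /matchingP/andP[NE tN] dMN.
by apply/matchingP; rewrite subUset ME NE trivIsetU.
Qed.

Lemma matching_setU1 M e :
  matching E M -> e \in E -> [disjoint e & cover M] -> matching E (e |: M).
Proof. by move=> mM eE de; apply: matchingU (matching_set1 eE) mM _; rewrite cover1. Qed.

Lemma maximal_matching_exists N :
  matching E N -> exists2 M : {set {set V}}, N \subset M & maximal_matching E M.
Proof.
move=> /matchingP mN.
have [M /maxsetP[/matchingP mM maxM] NM] :=
  maxset_exists (P := [pred M : {set {set V}} | (M \subset E) && trivIset M]) mN.
exists M => //; split=> // e eE eM /matchingP meM.
by move: (maxM _ meM (subsetU1 e M)) => /setP/(_ e); rewrite setU11 (negbTE eM).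
Qed.

Hypothesis equiE : equimatchable E.

Lemma matching_card_leq M N : maximal_matching E M -> matching E N -> #|N| <= #|M|.
Proof.
move=> maxM /maximal_matching_exists[N' NN' maxN'].
by rewrite (equiE maxM maxN') subset_leq_card.
Qed.

Lemma maximal_matching_card M N :
  maximal_matching E M -> matching E N -> #|N| = #|M| -> maximal_matching E N.
Proof.
move=> maxM mN cardN; have [N' NN' maxN'] := maximal_matching_exists mN.
suff -> : N = N' by [].
by apply/eqP; rewrite eqEcard NN' cardN (equiE maxM maxN') /=.
Qed.

End Matchings.

Section SimpleGraph.

Variables (V : finType) (E : {set {set V}}).
Hypothesis simpleE : simple_graph E.
Implicit Types (M : {set {set V}}) (f : {set V}).

Lemma edge_neq0 f : f \in E -> f != set0.
Proof. by move=> /simpleE cf; apply/eqP => f0; rewrite f0 cards0 in cf. Qed.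

Lemma edge_neq p q : [set p; q] \in E -> p != q.
Proof. by move/simpleE; rewrite cards2; case: (p != q). Qed.

Lemma edge_other f z : f \in E -> z \in f -> exists2 z', z' != z & f = [set z; z'].
Proof.
move=> /simpleE/eqP/cards2P[p [q [pq ->]]] /set2P[->|->].
  by exists q; rewrite // eq_sym.
by exists p; rewrite // setUC.
Qed.

Lemma matching_set0 M : matching E M -> set0 \notin M.
Proof. by move=> mM; apply/negP => /(matching_edge mM)/edge_neq0/eqP. Qed.

Lemma maximal_matchingP M :
  maximal_matching E M <->
  matching E M /\ forall f, f \in E -> ~~ [disjoint f & cover M].
Proof.
split=> -[mM maxM]; split=> // f fE.
  apply/negP => df; apply: (maxM f fE _ (matching_setU1 mM fE df)).
  exact: disjoint_cover_notin (edge_neq0 fE) df.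
move=> fM /matching_eq meq; move: (maxM f fE).
rewrite -setI_eq0 => /set0Pn[z /setIP[zf /bigcupP[e eM ze]]].
by rewrite (meq f e z (setU11 f M) (setU1r f eM) zf ze) eM in fM.
Qed.

Lemma maximal_matching_cover2 M a b :
  maximal_matching E M -> [set a; b] \in E -> (a \in cover M) || (b \in cover M).
Proof. by case/maximal_matchingP=> _ /[apply]; rewrite disjoint_set2 negb_and !negbK. Qed.

Lemma not_maximal_matching M : matching E M -> ~ maximal_matching E M ->
  exists2 f, f \in E & [disjoint f & cover M].
Proof.
move=> mM nmaxM; apply: NNPP => nf; apply/nmaxM/maximal_matchingP; split=> // f fE.
by apply/negP => df; apply: nf; exists f.
Qed.

Lemma cover_mate M z : matching E M -> z \in cover M ->
  exists2 z', [set z; z'] \in M & z' != z.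
Proof.
move=> mM /bigcupP[e eM ze].
have [z' z'z ez] := edge_other (matching_edge mM eM) ze.
by exists z'; rewrite -?ez.
Qed.

Lemma matching_exchange2 M t t' x x' :
  matching E M -> [set t; t'] \in M -> [set x; x'] \in M ->
  [set t; x] \in E -> x' != t ->
  exists M', [/\ matching E M', [set t; x] \in M', #|M'|.+1 = #|M| &
                cover M' = cover M :\: [set x'; t']].
Proof.
move=> mM ttM xxM txE x't; have tiM := matching_trivIset mM.
have tx := edge_neq txE.
have tt' := edge_neq (matching_edge mM ttM).
have xx' := edge_neq (matching_edge mM xxM).
have tx' : t != x' by rewrite eq_sym.
have neq : [set t; t'] != [set x; x'].
  by apply/eqP => /setP/(_ t); rewrite !inE eqxx (negbTE tx) (negbTE tx').
have xt' : x != t'.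
  apply: contra_neq neq => xt'; apply: (matching_eq mM ttM xxM (z := x)).
    by rewrite xt' set22.
  exact: set21.
have ttR : [set t; t'] \in M :\ [set x; x'] by rewrite !inE neq ttM.
pose R := M :\ [set x; x'] :\ [set t; t'].
have coverR : cover R = cover M :\: [set x; x'] :\: [set t; t'].
  by rewrite !coverD1 ?trivIsetD.
have dtx : [disjoint [set t; x] & cover R].
  by rewrite coverR disjoint_set2 !inE !eqxx /= andbF.
exists ([set t; x] |: R); split.
- exact: matching_setU1 (matchingS (subset_trans (subD1set _ _) (subD1set _ _)) mM) txE dtx.
- exact: setU11.
- rewrite card_setU1_disjoint ?edge_neq0 //.
  by rewrite [#|M|](cardsD1 [set x; x']) xxM [#|M :\ _|](cardsD1 [set t; t']) ttR.
apply/setP => z; rewrite cover_setU1 coverR !inE.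
have tM : t \in cover M := mem_cover ttM (set21 t t').
have xM : x \in cover M := mem_cover xxM (set21 x x').
case: (eqVneq z t) => [->|zt]; first by rewrite (negbTE tx') (negbTE tt') tM.
case: (eqVneq z x) => [->|zx]; first by rewrite (negbTE xx') (negbTE xt') xM orbT.
by rewrite /=; case: (z == t'); case: (z == x').
Qed.

Definition always_covered (z : V) :=
  forall M, maximal_matching E M -> z \in cover M.

Lemma not_always_covered z :
  ~ always_covered z -> exists2 M, maximal_matching E M & z \notin cover M.
Proof.
move=> nAz; apply: NNPP => noM; apply: nAz => M maxM.
by apply: contraT => zM; case: noM; exists M.
Qed.

Hypothesis equiE : equimatchable E.

Lemma always_covered_mate M t s u : always_covered t -> maximal_matching E M ->
  [set t; s] \in M -> [set s; u] \in E -> u \in cover M.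
Proof.
move=> At maxM tsM suE; apply: contraT => uM; have mM := maxM.1.
have ts := edge_neq (matching_edge mM tsM).
have coverD : cover (M :\ [set t; s]) = cover M :\: [set t; s].
  exact: coverD1 (matching_trivIset mM) tsM.
have dsu : [disjoint [set s; u] & cover (M :\ [set t; s])].
  by rewrite coverD disjoint_set2 !inE eqxx (negbTE uM) !andbF orbT.
have maxM' : maximal_matching E ([set s; u] |: M :\ [set t; s]).
  apply: (maximal_matching_card equiE maxM).
    exact: matching_setU1 (matchingS (subD1set _ _) mM) suE dsu.
  by rewrite card_setU1_disjoint ?edge_neq0 // [#|M|](cardsD1 [set t; s]) tsM.
move: (At _ maxM'); rewrite cover_setU1 coverD !inE eqxx (negbTE ts) /= orbF.
by move/eqP=> tu; rewrite -tu (At _ maxM) in uM.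
Qed.

End SimpleGraph.

Lemma simple_graph_setD1 (V : finType) (E : {set {set V}}) e :
  simple_graph E -> simple_graph (E :\ e).
Proof. by move=> simpleE f /setD1P[_ /simpleE]. Qed.

Lemma maximal_matching_setD1 (V : finType) (E M : {set {set V}}) e :
  maximal_matching E M -> e \notin M -> maximal_matching (E :\ e) M.
Proof.
move=> [[/subsetP ME dM] maxM] eM; split.
  split=> //; apply/subsetP => f fM; rewrite !inE ME // andbT.
  by apply: contraNneq eM => <-.
move=> f /setD1P[_ fE] fM [/subsetP fME dfM]; apply: (maxM f fE fM); split=> //.
by apply/subsetP => g /fME /setD1P[].
Qed.

Lemma maximal_matching_setD1_matched (V : finType) (E M : {set {set V}}) e :
  simple_graph E -> maximal_matching E M -> e \in M ->
  (forall z u, z \in e -> [set z; u] \in E -> u \in cover M) ->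
  maximal_matching (E :\ e) (M :\ e).
Proof.
move=> simpleE maxM eM coverN; have [/subsetP ME dM] := maxM.1.
apply/(maximal_matchingP (simple_graph_setD1 simpleE) (M :\ e)); split.
  split=> [|f g /setD1P[_ fM] /setD1P[_ gM]]; last exact: dM.
  by apply/subsetP => f /setD1P[fe /ME fE]; apply/setD1P.
move=> f /setD1P[fe fE]; rewrite coverD1 ?(matching_trivIset maxM.1) //.
move: (((maximal_matchingP simpleE M).1 maxM).2 f fE).
rewrite -!setI_eq0 => /set0Pn[z /setIP[zf zM]]; apply/set0Pn.
have [u _ fzu] := edge_other simpleE fE zf.
have [ze | zNe] := boolP (z \in e); last by exists z; rewrite !inE zf zNe zM.
have uM : u \in cover M by apply: coverN ze _; rewrite -fzu.
have [ue | uNe] := boolP (u \in e); last by exists u; rewrite !inE fzu set22 uNe uM.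
case/eqP: fe; apply/eqP; rewrite eqEcard (simpleE _ fE) (simpleE _ (ME _ eM)) leqnn andbT.
by rewrite fzu subUset !sub1set ze ue.
Qed.

Definition no_isolated_edge (V : finType) (E : {set {set V}}) :=
  forall e, e \in E -> exists2 g, g \in E & (g != e) && ~~ [disjoint g & e].

Section EdgeStable.

Variables (V : finType) (E : {set {set V}}).
Hypotheses (simpleE : simple_graph E) (stableE : edge_stable E).
Hypothesis adjE : no_isolated_edge E.
Let equiE : equimatchable E := stableE.1.
Implicit Types (M : {set {set V}}) (e : {set V}).

Lemma matched_edge_free_neighbour M e : maximal_matching E M -> e \in M ->
  exists z u, [/\ z \in e, u \notin cover M & [set z; u] \in E].
Proof.
move=> maxM eM; apply: NNPP => noN.
have maxMe : maximal_matching (E :\ e) (M :\ e).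
  apply: maximal_matching_setD1_matched => // z u ze zuE.
  by apply: contraT => uM; case: noN; exists z, u.
have eE := matching_edge maxM.1 eM.
have [g gE /andP[ge]] := adjE eE; rewrite -setI_eq0 => /set0Pn[z /setIP[zg ze]].
have [M2 gM2 maxM2] := maximal_matching_exists (matching_set1 gE).
have eM2 : e \notin M2.
  apply: contra ge => eM2; apply/eqP.
  by apply: (matching_eq maxM2.1 _ eM2 zg ze); rewrite -sub1set.
have := stableE.2 e eE _ _ maxMe (maximal_matching_setD1 maxM2 eM2).
by rewrite (equiE maxM2 maxM) [#|M|](cardsD1 e) eM add1n => /n_Sn.
Qed.

Lemma always_covered_indep t s :
  always_covered E t -> always_covered E s -> [set t; s] \notin E.
Proof.
move=> At As; apply/negP => tsE.
have [M tsM maxM] := maximal_matching_exists (matching_set1 tsE).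
rewrite sub1set in tsM; have stM : [set s; t] \in M by rewrite setUC.
have [z [u [/set2P[->|->] uM zuE]]] := matched_edge_free_neighbour maxM tsM.
  by rewrite (always_covered_mate simpleE equiE As maxM stM zuE) in uM.
by rewrite (always_covered_mate simpleE equiE At maxM tsM zuE) in uM.
Qed.

Section TwoStepExchange.

(* M arises from My by trading the edges of My at x and at t for [t x],
   as in matching_exchange2. *)

Variables (t x y x' t' : V) (My M : {set {set V}}).
Hypotheses (At : always_covered E t) (xyE : [set x; y] \in E).
Hypotheses (maxMy : maximal_matching E My) (yMy : y \notin cover My).
Hypothesis ttMy : [set t; t'] \in My.
Hypotheses (mM : matching E M) (txM : [set t; x] \in M) (cardM : #|M|.+1 = #|My|).
Hypothesis coverM : cover M = cover My :\: [set x'; t'].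

Lemma exchange_maximal_setU1 f :
  f \in E -> [disjoint f & cover M] -> maximal_matching E (f |: M).
Proof.
move=> fE df; apply: (maximal_matching_card equiE maxMy (matching_setU1 mM fE df)).
by rewrite card_setU1_disjoint ?(edge_neq0 simpleE).
Qed.

Lemma exchange_free_edge_y f : f \in E -> [disjoint f & cover M] -> y \in f.
Proof.
move=> fE df; have maxMf := exchange_maximal_setU1 fE df.
move: (always_covered_mate simpleE equiE At maxMf (setU1r f txM) xyE).
by rewrite cover_setU1 coverM !inE (negbTE yMy) !andbF orbF.
Qed.

Lemma exchange_free_nbr_y u : [set y; u] \in E -> u \notin cover M -> u = x'.
Proof.
move=> yuE; have := maximal_matching_cover2 simpleE maxMy yuE.
rewrite (negbTE yMy) /= coverM !inE => -> /=; rewrite andbT negbK.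
case/orP=> /eqP // ut'; rewrite ut' setUC in yuE.
by move: (always_covered_mate simpleE equiE At maxMy ttMy yuE); rewrite (negbTE yMy).
Qed.

Lemma exchange_contradiction : False.
Proof.
have [f fE df] : exists2 f, f \in E & [disjoint f & cover M].
  apply: (not_maximal_matching simpleE mM) => /(equiE maxMy).
  by rewrite -cardM => /esym/n_Sn.
have [q qy fyq] := edge_other simpleE fE (exchange_free_edge_y fE df).
have [_ qM] : y \notin cover M /\ q \notin cover M.
  by move: df; rewrite fyq disjoint_set2 => /andP.
have qx' : q = x' by apply: exchange_free_nbr_y qM; rewrite -fyq.
have maxMf := exchange_maximal_setU1 fE df.
have [z [u [zf uN zuE]]] := matched_edge_free_neighbour maxMf (setU11 f M).
move: uN; rewrite cover_setU1 inE negb_or => /andP[uf uM].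
move: zf; rewrite fyq => /set2P[zy|zq]; subst z.
  by move: uf; rewrite (exchange_free_nbr_y zuE uM) -qx' fyq set22.
have := exchange_free_edge_y zuE; rewrite disjoint_set2 qM uM => /(_ isT) /set2P[yq|yu].
  by rewrite yq eqxx in qy.
by rewrite -yu fyq set21 in uf.
Qed.

End TwoStepExchange.

Lemma always_covered_two_steps t x y :
  always_covered E t -> [set t; x] \in E -> [set x; y] \in E -> always_covered E y.
Proof.
move=> At txE xyE My maxMy; apply: contraT => yMy; have mMy := maxMy.1.
have yxE : [set y; x] \in E by rewrite setUC.
have xMy : x \in cover My.
  by move: (maximal_matching_cover2 simpleE maxMy yxE); rewrite (negbTE yMy).
have [x' xxMy _] := cover_mate simpleE mMy xMy.
have [t' ttMy _] := cover_mate simpleE mMy (At _ maxMy).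
have x't : x' != t.
  apply: contraNneq yMy => x't.
  by apply: (always_covered_mate simpleE equiE At maxMy _ xyE); rewrite setUC -x't.
have [M [mM txM cardM coverM]] := matching_exchange2 simpleE mMy ttMy xxMy txE x't.
by case: (exchange_contradiction At xyE maxMy yMy ttMy mM txM cardM coverM).
Qed.

Lemma bipartite_of_always_covered t0 :
  connected_graph E -> always_covered E t0 -> bipartite E.
Proof.
move=> connE At0.
have near_always_covered z :
    always_covered E z \/ exists2 t, always_covered E t & [set t; z] \in E.
  pose N z := always_covered E z \/ exists2 t, always_covered E t & [set t; z] \in E.
  apply/(asboolP (N z)); apply: contraT => Nz.
  have [|p [q [/asboolP Np /asboolP Nq /and4P[_ _ _ pqE]]]] :=
    connect_exit (P := fun z => asbool (N z)) (connE t0 z (in_setT _) (in_setT _)) _ Nz.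
    by apply/asboolP; left.
  case: Nq; case: (classic (always_covered E q)) => [|Aq]; first by left.
  case: Np => [Ap | [t At tpE]]; first by right; exists p.
  by case: Aq; apply: always_covered_two_steps At tpE pqE.
pose A := [set z | asbool (always_covered E z)].
have inA z : reflect (always_covered E z) (z \in A) by rewrite inE; apply: asboolP.
exists A => e eE; have /eqP/cards2P[p [q [_ epq]]] := simpleE eE; subst e.
case: (boolP (p \in A)) => [/inA Ap | pA]; case: (boolP (q \in A)) => [/inA Aq | qA].
- by rewrite (negbTE (always_covered_indep Ap Aq)) in eE.
- by apply: cards2I1 qA; apply/inA.
- by rewrite setUC; apply: cards2I1 pA; apply/inA.
case: (near_always_covered p) => [/inA | [t At tpE]]; first by rewrite (negbTE pA).
by move: (always_covered_two_steps At tpE eE) => /inA; rewrite (negbTE qA).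
Qed.

End EdgeStable.

Section Separation.

Variables (V : finType) (E : {set {set V}}).
Hypothesis simpleE : simple_graph E.
Variable v : V.
Implicit Types (S T : {set V}) (M : {set {set V}}).

Definition separates S T :=
  [/\ [disjoint S & T], S :|: T = [set~ v] &
      forall p q, p \in S -> q \in T -> [set p; q] \notin E].

Lemma separatesC S T : separates S T -> separates T S.
Proof.
case=> dST ST noE; split; rewrite 1?disjoint_sym 1?setUC //.
by move=> p q pT qS; rewrite setUC noE.
Qed.

Lemma separates_mem S T z : separates S T -> (z \in S) || (z \in T) = (z != v).
Proof. by case=> _ ST _; rewrite -in_setU ST !inE. Qed.

Lemma separates_notin S T : separates S T -> v \notin S.
Proof. by move/(separates_mem v); rewrite eqxx => /norP[]. Qed.

Lemma separates_nbr S T z z' :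
  separates S T -> z \in S -> [set z; z'] \in E -> z' != v -> z' \in S.
Proof.
move=> sep zS zz'E; rewrite -(separates_mem z' sep) => /orP[//|z'T].
by case: sep => _ _ /(_ z z' zS z'T); rewrite zz'E.
Qed.

Lemma edge_side S T f :
  separates S T -> f \in E -> v \notin f -> (f \subset S) || (f \subset T).
Proof.
move=> sep fE; have /eqP/cards2P[p [q [_ fpq]]] := simpleE fE.
rewrite fpq in fE *; rewrite !inE negb_or ![v == _]eq_sym => /andP[pv qv].
rewrite !subUset !sub1set; move: (separates_mem p sep); rewrite pv.
case/orP=> [pS | pT]; first by rewrite pS (separates_nbr sep pS fE qv).
by rewrite pT (separates_nbr (separatesC sep) pT fE qv) orbT.
Qed.

Lemma side_sub M S : M ::&: S \subset M.
Proof. by rewrite -setI_powerset subsetIl. Qed.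

Lemma cover_side_sub M S : cover (M ::&: S) \subset S.
Proof. exact: subset_trans (cover_setI M S) (subsetIr _ _). Qed.

Lemma cover_side_cover M S : cover (M ::&: S) \subset cover M.
Proof. exact: subset_trans (cover_setI M S) (subsetIl _ _). Qed.

Lemma disjoint_cover_sides S T M1 M2 :
  separates S T -> [disjoint cover (M1 ::&: S) & cover (M2 ::&: T)].
Proof.
by case=> dST _ _; apply: disjointW (cover_side_sub _ _) (cover_side_sub _ _) dST.
Qed.

Lemma disjoint_sides S T M1 M2 : separates S T -> matching E M1 ->
  [disjoint M1 ::&: S & M2 ::&: T].
Proof.
move=> sep mM1; apply: disjoint_cover_disjoint (disjoint_cover_sides _ _ sep).
exact: contra (subsetP (side_sub _ _) set0) (matching_set0 simpleE mM1).
Qed.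

Lemma notin_cover_side S T M z : separates S T -> z \in T -> z \notin cover (M ::&: S).
Proof.
case=> dST _ _ zT; apply: contra (subsetP (cover_side_sub M S) z) _.
by rewrite (disjointFl dST zT).
Qed.

Lemma mate_notin_side M S p :
  matching E M -> v \notin S -> [set v; p] \in M -> p \notin cover (M ::&: S).
Proof.
move=> mM vS vpM; apply/negP => /bigcupP[e /setIdP[eM eS] pe].
move: (matching_eq mM eM vpM pe (set22 v p)) eS => -> /subsetP/(_ v (set21 v p)).
by rewrite (negbTE vS).
Qed.

Lemma mate_eq M p :
  matching E M -> [set v; p] \in M -> forall q, [set v; q] \in M -> q = p.
Proof.
move=> mM vpM q vqM; have := matching_eq mM vqM vpM (set21 v q) (set21 v p).
move/setP/(_ q); rewrite !inE eqxx orbT => /esym/orP[/eqP qv|/eqP //].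
by move: (edge_neq simpleE (matching_edge mM vqM)); rewrite qv eqxx.
Qed.

Lemma cover_sideP S T M z : separates S T -> matching E M ->
  z \in cover M -> z \in S -> (z \in cover (M ::&: S)) || ([set v; z] \in M).
Proof.
move=> sep mM /bigcupP[e eM ze] zS.
have [z' z'z ezz] := edge_other simpleE (matching_edge mM eM) ze.
have [z'v | z'v] := eqVneq z' v; first by rewrite setUC -z'v -ezz eM orbT.
apply/orP; left; apply/bigcupP; exists e => //; rewrite inE eM ezz subUset !sub1set zS.
by apply: separates_nbr sep zS _ z'v; rewrite -ezz (matching_edge mM eM).
Qed.

Lemma card_matching_sides S T M : separates S T -> matching E M ->
  #|M| = (v \in cover M) + #|M ::&: S| + #|M ::&: T|.
Proof.
move=> sep mM; pose Mv := [set e in M | v \in e].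
have vS := separates_notin sep; have vT := separates_notin (separatesC sep).
have cardMv : #|Mv| = (v \in cover M).
  have [/bigcupP[e eM ve] | vM] := boolP (v \in cover M); last first.
    apply/eqP; rewrite cards_eq0; apply/eqP/setP => e; rewrite !inE.
    by apply/negP => /andP[eM ve]; rewrite (mem_cover eM ve) in vM.
  apply/eqP/cards1P; exists e; apply/setP => f; rewrite !inE.
  by apply/andP/eqP => [[fM vf]|->]; [exact: matching_eq mM fM eM vf ve | ].
have dMv : [disjoint Mv & M ::&: S :|: M ::&: T].
  rewrite -setI_eq0; apply/eqP/setP => e; rewrite !inE; apply/negP.
  by case/andP=> /andP[_ ve] /orP[] /andP[_ /subsetP/(_ v ve)]; apply/negP.
have defM : M = Mv :|: (M ::&: S :|: M ::&: T).
  apply/setP => e; rewrite !inE; case: (boolP (e \in M)) => //= eM.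
  case: (boolP (v \in e)) => //= vNe.
  by rewrite (edge_side sep (matching_edge mM eM) vNe).
rewrite {1}defM !cardsU (disjoint_setI0 dMv) (disjoint_setI0 (disjoint_sides M sep mM)).
by rewrite !cards0 !subn0 addnA cardMv.
Qed.

Definition glue S T M1 M2 (p : V) := [set v; p] |: ((M1 ::&: S) :|: (M2 ::&: T)).

Lemma cover_glue S T M1 M2 p : cover (glue S T M1 M2 p) =
  [set v; p] :|: (cover (M1 ::&: S) :|: cover (M2 ::&: T)).
Proof. by rewrite cover_setU1 cover_setU. Qed.

Lemma matching_glue S T M1 M2 p :
  separates S T -> matching E M1 -> matching E M2 -> [set v; p] \in E ->
  p \notin cover (M1 ::&: S) -> p \notin cover (M2 ::&: T) ->
  matching E (glue S T M1 M2 p) /\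
  #|glue S T M1 M2 p| = #|M1 ::&: S| + #|M2 ::&: T| + 1.
Proof.
move=> sep mM1 mM2 vpE pS pT.
have [mS mT] := (matchingS (side_sub M1 S) mM1, matchingS (side_sub M2 T) mM2).
have dST := disjoint_cover_sides M1 M2 sep.
have vS : v \notin cover (M1 ::&: S).
  exact: contra (subsetP (cover_side_sub _ _) v) (separates_notin sep).
have vT : v \notin cover (M2 ::&: T).
  exact: contra (subsetP (cover_side_sub _ _) v) (separates_notin (separatesC sep)).
have dvp : [disjoint [set v; p] & cover (M1 ::&: S :|: M2 ::&: T)].
  by rewrite cover_setU disjoint_set2 !inE !negb_or vS vT pS pT.
split; first exact: matching_setU1 (matchingU mS mT dST) vpE dvp.
rewrite card_setU1_disjoint ?(edge_neq0 simpleE) // addn1 cardsU.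
by rewrite (disjoint_setI0 (disjoint_sides M2 sep mM1)) cards0 subn0.
Qed.

Lemma side_meets_cover S T M p f : separates S T -> maximal_matching E M ->
  (forall q, [set v; q] \in M -> q = p) -> f \in E -> f \subset S ->
  exists2 z, z \in f & (z == p) || (z \in cover (M ::&: S)).
Proof.
move=> sep maxM vM fE fS; have [mM coverM] := (maximal_matchingP simpleE M).1 maxM.
move: (coverM f fE); rewrite -setI_eq0 => /set0Pn[z /setIP[zf zM]]; exists z => //.
by case/orP: (cover_sideP sep mM zM (subsetP fS z zf)) => [->|/vM ->]; rewrite ?eqxx ?orbT.
Qed.

Lemma maximal_glue S T M1 M2 p : separates S T -> matching E (glue S T M1 M2 p) ->
  maximal_matching E M1 -> (forall q, [set v; q] \in M1 -> q = p) ->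
  maximal_matching E M2 -> (forall q, [set v; q] \in M2 -> q = p) ->
  maximal_matching E (glue S T M1 M2 p).
Proof.
move=> sep mG maxM1 vM1 maxM2 vM2; apply/(maximal_matchingP simpleE); split=> // f fE.
rewrite cover_glue -setI_eq0; apply/set0Pn.
have [vf | vNf] := boolP (v \in f); first by exists v; rewrite !inE vf eqxx.
case/orP: (edge_side sep fE vNf) => [fS | fT].
  have [z zf zpM] := side_meets_cover sep maxM1 vM1 fE fS.
  by exists z; rewrite !inE zf; case/orP: zpM => ->; rewrite ?orbT.
have [z zf zpM] := side_meets_cover (separatesC sep) maxM2 vM2 fE fT.
by exists z; rewrite !inE zf; case/orP: zpM => ->; rewrite ?orbT.
Qed.

Hypothesis equiE : equimatchable E.

Lemma mate_side S T M0 M x p :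
  separates S T -> maximal_matching E M0 -> v \notin cover M0 ->
  maximal_matching E M -> x \in S -> [set v; x] \in E -> x \notin cover M ->
  [set v; p] \in M -> p \notin T.
Proof.
move=> sep maxM0 vM0 maxM xS vxE xM vpM; apply/negP => pT.
have [mM0 mM] := (maxM0.1, maxM.1); have sepC := separatesC sep.
have noM0 q : [set v; q] \in M0 -> q = p.
  by move/mem_cover/(_ (set21 v q)); rewrite (negbTE vM0).
have [mZ5 cardZ5] := matching_glue sep mM0 mM (matching_edge mM vpM)
  (notin_cover_side M0 sep pT) (mate_notin_side mM (separates_notin sepC) vpM).
have maxZ5 := maximal_glue sep mZ5 maxM0 noM0 maxM (mate_eq mM vpM).
have xMS : x \notin cover (M ::&: S) := contra (subsetP (cover_side_cover M S) x) xM.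
have [mZ6 cardZ6] := matching_glue sep mM mM0 vxE xMS (notin_cover_side M0 sepC xS).
(* Z5 is maximal while the matching Z6 would exceed #|M0| by one. *)
have := matching_card_leq equiE maxM0 mZ6.
have := equiE maxM0 maxZ5; have := equiE maxM0 maxM.
rewrite cardZ5 cardZ6 (card_matching_sides sep mM0) (card_matching_sides sep mM).
by rewrite (negbTE vM0) (mem_cover vpM (set21 v p)); lia.
Qed.

Lemma mate_in_side S T M0 N y :
  separates S T -> maximal_matching E M0 -> v \notin cover M0 ->
  maximal_matching E N -> y \in S -> [set v; y] \in E -> y \notin cover N ->
  exists2 p, [set v; p] \in N & p \in S.
Proof.
move=> sep maxM0 vM0 maxN yS vyE yN.
have vN : v \in cover N.
  by move: (maximal_matching_cover2 simpleE maxN vyE); rewrite (negbTE yN) orbF.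
have [p vpN pv] := cover_mate simpleE maxN.1 vN; exists p => //.
move: (separates_mem p sep) (mate_side sep maxM0 vM0 maxN yS vyE yN vpN).
by rewrite pv => /orP[// | pT] /negP.
Qed.

End Separation.

Section CutVertex.

Variables (V : finType) (E : {set {set V}}).
Hypotheses (simpleE : simple_graph E) (stableE : edge_stable E).
Hypothesis adjE : no_isolated_edge E.
Let equiE : equimatchable E := stableE.1.
Variables (v x x' w' : V) (S T : {set V}) (M0 M M' : {set {set V}}).
Hypotheses (sep : separates E v S T) (xS : x \in S) (vxE : [set v; x] \in E).
Hypotheses (maxM0 : maximal_matching E M0) (vM0 : v \notin cover M0).
Hypotheses (maxM : maximal_matching E M) (xM : x \notin cover M).
Hypotheses (vx'M : [set v; x'] \in M) (x'S : x' \in S).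
Hypotheses (maxM' : maximal_matching E M') (vw'M' : [set v; w'] \in M') (w'T : w' \in T).

Let mM0 := maxM0.1.
Let mM := maxM.1.
Let mM' := maxM'.1.
Let sepC := separatesC sep.
Let Z := glue v S T M M' w'.

Lemma glue_mates_small : matching E Z /\ #|Z|.+1 = #|M0|.
Proof.
have noM0 p q : [set v; q] \in M0 -> q = p.
  by move/mem_cover/(_ (set21 v q)); rewrite (negbTE vM0).
have x'MS := mate_notin_side mM (separates_notin sep) vx'M.
have w'M'T := mate_notin_side mM' (separates_notin sepC) vw'M'.
have [mZ1 cardZ1] := matching_glue simpleE sep mM mM0 (matching_edge mM vx'M) x'MS
  (notin_cover_side M0 sepC x'S).
have maxZ1 := maximal_glue simpleE sep mZ1 maxM (mate_eq simpleE mM vx'M) maxM0 (noM0 x').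
have [mZ2 cardZ2] := matching_glue simpleE sep mM0 mM' (matching_edge mM' vw'M')
  (notin_cover_side M0 sep w'T) w'M'T.
have maxZ2 :=
  maximal_glue simpleE sep mZ2 maxM0 (noM0 w') maxM' (mate_eq simpleE mM' vw'M').
have [mZ cardZ] := matching_glue simpleE sep mM mM' (matching_edge mM' vw'M')
  (notin_cover_side M sep w'T) w'M'T.
(* Comparing the maximal Z1 and Z2 with M0 shows that M and M' each have one
   edge fewer than M0 on the side of their mate of v. *)
split=> //; have := equiE maxM0 maxZ1; have := equiE maxM0 maxZ2.
by rewrite /Z cardZ cardZ1 cardZ2 (card_matching_sides simpleE sep mM0) (negbTE vM0); lia.
Qed.

Lemma maximal_glue_x : maximal_matching E (glue v S T M M x).
Proof.
have xMS : x \notin cover (M ::&: S) := contra (subsetP (cover_side_cover M S) x) xM.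
have [mN cardN] := matching_glue simpleE sep mM mM vxE xMS (notin_cover_side M sepC xS).
apply: (maximal_matching_card equiE maxM mN).
by rewrite cardN (card_matching_sides simpleE sep mM) (mem_cover vx'M (set21 v x')); lia.
Qed.

Lemma glue_x_no_edge u :
  u \in S -> u != x -> u \notin cover (M ::&: S) -> [set x'; u] \notin E.
Proof.
have coverN z : z \in S -> z != x -> z \notin cover (M ::&: S) ->
    z \notin cover (glue v S T M M x).
  move=> zS zx zMS; have zv : z != v.
    by apply: contraNneq (separates_notin sep) => <-.
  have zMT := notin_cover_side M sepC zS.
  by rewrite cover_glue !inE (negbTE zv) (negbTE zx) (negbTE zMS) (negbTE zMT).
have x'x : x' != x by apply: contraNneq xM => <-; apply: mem_cover vx'M (set22 v x').
have x'MS := mate_notin_side mM (separates_notin sep) vx'M.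
move=> uS ux uMS; apply/negP => /(maximal_matching_cover2 simpleE maximal_glue_x).
by rewrite (negbTE (coverN _ x'S x'x x'MS)) (negbTE (coverN _ uS ux uMS)).
Qed.

Lemma glue_mates_free_edge :
  exists2 q, [set x'; q] \in E & [disjoint [set x'; q] & cover Z].
Proof.
have [mZ cardZ] := glue_mates_small.
have [f fE df] : exists2 f, f \in E & [disjoint f & cover Z].
  apply: (not_maximal_matching simpleE mZ) => /(equiE maxM0).
  by rewrite -cardZ => /esym/n_Sn.
have ZP z : z \in f -> z \in cover Z -> False by move=> zf; rewrite (disjointFr df zf).
have vf : v \notin f by apply/negP => /ZP; rewrite cover_glue !inE eqxx => /(_ isT).
case/orP: (edge_side simpleE sep fE vf) => [fS | fT]; last first.
  have [z zf /orP[/eqP zw' | zM'T]] :=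
    side_meets_cover simpleE sepC maxM' (mate_eq simpleE mM' vw'M') fE fT.
    by case: (ZP z zf); rewrite cover_glue !inE zw' eqxx orbT.
  by case: (ZP z zf); rewrite cover_glue !inE zM'T !orbT.
have [z zf /orP[/eqP zx' | zMS]] :=
  side_meets_cover simpleE sep maxM (mate_eq simpleE mM vx'M) fE fS; last first.
  by case: (ZP z zf); rewrite cover_glue !inE zMS !orbT.
have [q _ fx'q] := edge_other simpleE fE zf; rewrite zx' in fx'q.
by exists q; rewrite -fx'q.
Qed.

Lemma cut_vertex_contradiction : False.
Proof.
have [mZ cardZ] := glue_mates_small.
have [q x'qE dq] := glue_mates_free_edge.
move: (dq); rewrite disjoint_set2 cover_glue !inE !negb_or => /and4P[_ /andP[qv _] qMS _].
have qS : q \in S := separates_nbr sep x'S x'qE qv.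
have qx : q = x := contraTeq (glue_x_no_edge qS ^~ qMS) x'qE.
rewrite {}qx in x'qE dq qS qMS.
have maxZ4 : maximal_matching E ([set x'; x] |: Z).
  apply: (maximal_matching_card equiE maxM0 (matching_setU1 mZ x'qE dq)).
  by rewrite card_setU1_disjoint ?(edge_neq0 simpleE).
have [z [u [zx'x uZ4 zuE]]] :=
  matched_edge_free_neighbour simpleE stableE adjE maxZ4 (setU11 _ Z).
move: uZ4; rewrite cover_setU1 cover_glue !inE !negb_or.
case/and4P=> /andP[ux' ux] /andP[uv _] uMS _.
have zS : z \in S by case/set2P: zx'x => ->.
have uS : u \in S := separates_nbr sep zS zuE uv.
case/set2P: zx'x => zeq; subst z; first by move: (glue_x_no_edge uS ux uMS); rewrite zuE.
have uM : u \notin cover M.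
  apply/negP => /(cover_sideP simpleE sep mM)/(_ uS); rewrite (negbTE uMS) /=.
  by move/(mate_eq simpleE mM vx'M)/eqP; rewrite (negbTE ux').
by move: (maximal_matching_cover2 simpleE maxM zuE); rewrite (negbTE xM) (negbTE uM).
Qed.

End CutVertex.

Lemma cut_vertex_separates (V : finType) (E : {set {set V}}) v :
  simple_graph E -> cut_vertex E v ->
  exists S T, [/\ separates E v S T, S != set0 & T != set0].
Proof.
move=> simpleE cutv; pose r := adj_in E ([set: V] :\ v).
have [a [b [aV bV nab]]] :
    exists a b, [/\ a \in [set: V] :\ v, b \in [set: V] :\ v & ~~ connect r a b].
  apply: NNPP => H; apply: cutv => a b aV bV; apply: contraT => nab.
  by case: H; exists a, b.
have [av bv] : a != v /\ b != v by move: aV bV; rewrite !inE !andbT; split.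
exists [set z | (z != v) && connect r a z], [set z | (z != v) && ~~ connect r a z].
split; last 2 first.
- by apply/set0Pn; exists a; rewrite inE av connect0.
- by apply/set0Pn; exists b; rewrite inE bv.
split.
- rewrite -setI_eq0; apply/eqP/setP => z; rewrite !inE.
  by case: (connect r a z); rewrite ?andbF ?andbT ?andNb.
- by apply/setP => z; rewrite !inE; case: (connect r a z); rewrite ?andbT ?andbF ?orbF.
move=> p q; rewrite !inE => /andP[pv apq] /andP[qv]; apply: contra => pqE.
apply: connect_trans apq (connect1 _).
by rewrite /r /adj_in !inE pv qv (edge_neq simpleE pqE) pqE.
Qed.

Lemma separates_neighbour (V : finType) (E : {set {set V}}) v S T a :
  connected_graph E -> separates E v S T -> a \in S ->
  exists2 x, x \in S & [set v; x] \in E.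
Proof.
move=> connE sep aS.
have [p [q [pS qNS /and4P[_ _ _ pqE]]]] :=
  connect_exit (P := fun z => z \in S) (connE a v (in_setT a) (in_setT v)) aS
    (separates_notin sep).
exists p => //; have [qv | qv] := eqVneq q v; first by rewrite setUC -qv.
by rewrite (separates_nbr sep pS pqE qv) in qNS.
Qed.

Lemma separates_card (V : finType) (E : {set {set V}}) v S T x w :
  separates E v S T -> x \in S -> w \in T -> 2 < #|V|.
Proof.
move=> sep xS wT; apply: leq_trans (max_card [set v; x; w]).
have xv : x != v by apply: contraNneq (separates_notin sep) => <-.
have wv : w != v by apply: contraNneq (separates_notin (separatesC sep)) => <-.
have xw : x != w.
  by apply: contraTneq wT => <-; case: sep => dST _ _; rewrite (disjointFr dST xS).
by rewrite -setUA cardsU1 cards2 xw !inE negb_or ![v == _]eq_sym xv wv.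
Qed.

Lemma no_isolated_edge_connected (V : finType) (E : {set {set V}}) :
  simple_graph E -> connected_graph E -> 2 < #|V| -> no_isolated_edge E.
Proof.
move=> simpleE connE V3 e eE.
have /set0Pn[z] : ~: e != set0.
  by rewrite -card_gt0; move: (cardsC e); rewrite (simpleE _ eE); lia.
have /set0Pn[p pe] := edge_neq0 simpleE eE; rewrite inE => zNe.
have [p' [q' [p'e q'Ne /and4P[_ _ _ p'q'E]]]] :=
  connect_exit (P := fun y => y \in e) (connE p z (in_setT p) (in_setT z)) pe zNe.
exists [set p'; q'] => //; apply/andP; split.
  by apply: contraNneq q'Ne => <-; rewrite set22.
by rewrite -setI_eq0; apply/set0Pn; exists p'; rewrite !inE eqxx.
Qed.

Lemma always_covered_at_cut (V : finType) (E : {set {set V}}) v S T x w :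
  simple_graph E -> edge_stable E -> no_isolated_edge E -> separates E v S T ->
  x \in S -> [set v; x] \in E -> w \in T -> [set v; w] \in E ->
  [\/ always_covered E v, always_covered E x | always_covered E w].
Proof.
move=> simpleE stableE adjE sep xS vxE wT vwE; have equiE := stableE.1.
case: (classic (always_covered E v)) => [|/not_always_covered[M0 maxM0 vM0]].
  by constructor 1.
case: (classic (always_covered E x)) => [|/not_always_covered[M maxM xM]].
  by constructor 2.
case: (classic (always_covered E w)) => [|/not_always_covered[M' maxM' wM']].
  by constructor 3.
have [x' vx'M x'S] := mate_in_side simpleE equiE sep maxM0 vM0 maxM xS vxE xM.
have [w' vw'M' w'T] :=
  mate_in_side simpleE equiE (separatesC sep) maxM0 vM0 maxM' wT vwE wM'.
by case: (cut_vertex_contradiction simpleE stableE adjE sep xS vxE maxM0 vM0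
  maxM xM vx'M x'S maxM' vw'M' w'T).
Qed.

Theorem theorem4p1 (V : finType) (E : {set {set V}}) :
  simple_graph E -> connected_graph E -> edge_stable E ->
  (exists v : V, cut_vertex E v) -> bipartite E.
Proof.
move=> simpleE connE stableE [v cutv].
have [S [T [sep /set0Pn[a aS] /set0Pn[b bT]]]] := cut_vertex_separates simpleE cutv.
have [x xS vxE] := separates_neighbour connE sep aS.
have [w wT vwE] := separates_neighbour connE (separatesC sep) bT.
have adjE := no_isolated_edge_connected simpleE connE (separates_card sep xS wT).
have [At | At | At] := always_covered_at_cut simpleE stableE adjE sep xS vxE wT vwE;
  exact: (bipartite_of_always_covered simpleE stableE adjE connE At).
Qed.
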